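(* Let $a<b$ be real numbers, let $M\colon[a,b]\to\mathbb{R}$ be non-decreasing, and let $N\colon[M(a),M(b)]\to\mathbb{R}$ be non-decreasing. Let $\Lambda=N\circ M\colon[a,b]\to\mathbb{R}$, let $\lambda$ be the measure on $[a,b]$ corresponding to $\Lambda$, and let $\nu$ be the measure on $[M(a),M(b)]$ corresponding to $N$. Let \[H=\{y\in[M(a),M(b)] : M^{-1}[\{y\}]\text{ contains more than one point}\},\] and let $X\colon[M(a),M(b)]\to[a,b]$ be defined by $X(y)=\inf\{x\in[a,b]: y\le M(x)\}$. Suppose that $N$ is right-continuous at $y$ for each $y\in H$ (where, by convention, $N$ is considered right-continuous at $M(b)$, with $N(M(b)+)=N(M(b))$). Then $\lambda$ is the image measure of $\nu$ under $X$, i.e. $\lambda(E)=\nu(X^{-1}[E])$ for every Borel set $E\subseteq[a,b]$, and for each bounded Borel function $f\colon[a,b]\to\mathbb{R}$, \[\int_a^b f(x)\,dN(M(x))=\int_{M(a)}^{M(b)} f(X(y))\,dN(y).\]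
   Context: ''Non-decreasing'' is what the paper calls increasing. For a non-decreasing function $F\colon[c,d]\to\mathbb{R}$, the measure corresponding to $F$ is the unique Borel measure $\mu$ on $[c,d]$ such that for every continuous $f\colon[c,d]\to\mathbb{R}$, $\int_{[c,d]} f\,d\mu$ equals the Riemann–Stieltjes integral $\int_c^d f(x)\,dF(x)$. For a bounded Borel function $f$, the Lebesgue–Stieltjes integral $\int_c^d f(x)\,dF(x)$ is defined as $\int_{[c,d]} f\,d\mu$. The notation $\int_a^b f(x)\,dN(M(x))$ means $\int_a^b f(x)\,d\Lambda(x)$ with $\Lambda=N\circ M$. *)

From HB Require Import structures.
From mathcomp Require Import all_boot all_order all_algebra.
From mathcomp Require Import all_classical all_reals all_analysis.
Set Implicit Arguments. Unset Strict Implicit. Unset Printing Implicit Defensive.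
Import Order.TTheory GRing.Theory Num.Theory.
Import numFieldNormedType.Exports.
Local Open Scope classical_set_scope.
Local Open Scope ring_scope.

Section Defs.
Variable R : realType.

Definition RS_integral_is (f F : R -> R) (c d I : R) : Prop :=
  forall eps : R, 0 < eps -> exists2 delta : R, 0 < delta &
    forall (n : nat) (x t : nat -> R),
      x 0%N = c -> x n = d ->
      (forall i : nat, (i < n)%N ->
         [/\ x i < x i.+1, x i.+1 - x i < delta & x i <= t i <= x i.+1]) ->
      `| \sum_(i < n) f (t i) * (F (x i.+1) - F (x i)) - I | < eps.

(* mu is "the measure corresponding to F" on [c,d]: a Borel measure
   (represented on R, concentrated on [c,d]) such that for every continuous
   f on [c,d], \int_[c,d] f dmu is the Riemann--Stieltjes integral
   \int_c^d f dF. *)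
Definition corresponding_measure (F : R -> R) (c d : R)
    (mu : {measure set R -> \bar R}) : Prop :=
  mu (~` `[c, d]) = 0%E /\
  forall f : R -> R, {within `[c, d], continuous f} ->
    exists2 I : R, RS_integral_is f F c d I &
      (\int[mu]_(x in `[c, d]) (f x)%:E = I%:E)%E.

Definition multi_level_set (M : R -> R) (a b : R) : set R :=
  [set y | M a <= y <= M b /\
     exists x1 x2, [/\ a <= x1 <= b, a <= x2 <= b, x1 != x2, M x1 = y & M x2 = y]].

Definition gen_inverse (M : R -> R) (a b : R) (y : R) : R :=
  inf [set x | a <= x <= b /\ y <= M x].

End Defs.

From HB Require Import structures.
From mathcomp Require Import all_boot all_order all_algebra.
From mathcomp Require Import all_classical all_reals all_analysis.
From mathcomp Require Import ring lra measurable_realfun.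
Import Order.TTheory GRing.Theory Num.Theory.
Import numFieldNormedType.Exports.
Local Open Scope classical_set_scope.
Local Open Scope ring_scope.

Set Implicit Arguments. Unset Strict Implicit. Unset Printing Implicit Defensive.

(* Both lam and the image of nu under X are finite Borel measures, so they
   agree as soon as their distribution functions do. Testing the defining
   property of a corresponding measure against continuous cut-off functions
   shows that its distribution function at t is the right limit F (t+) - F c.
   For a <= t < b, X y <= t holds exactly when y <= m := inf M (]t, b]), so the
   two distribution functions at t are (N o M)(t+) - N (M a) and
   N (m+) - N (M a). These right limits agree: either m = M s for some s > t,
   and then m is a multiple level of M, where N is right-continuous; or M
   approaches m strictly from above. The integral formula is the change of
   variables for image measures. *)

Section partitions.
Variable R : realType.

Lemma partition_le n (x : nat -> R) : (forall i, (i < n)%N -> x i < x i.+1) ->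
  forall i j, (i <= j <= n)%N -> x i <= x j.
Proof.
move=> incr i j /andP[ij jn].
apply: (@homo_leq_in _ [pred k | (k <= n)%N] x <=%R) => //=.
- exact: le_trans.
- by move=> ? k ? jn' m /andP[_ /ltnW/leq_trans]; apply.
- by move=> k _ kn; exact/ltW/incr.
- exact: (leq_trans ij).
Qed.

Lemma partition_in_itv c d n (x : nat -> R) : x 0%N = c -> x n = d ->
  (forall i, (i < n)%N -> x i < x i.+1) ->
  forall i, (i <= n)%N -> x i \in `[c, d].
Proof.
move=> x0 xn incr i lin; rewrite in_itv /= -x0 -xn.
by rewrite !(partition_le incr) // ?lin ?leqnn.
Qed.

Lemma uniform_partition c d delta : c <= d -> 0 < delta ->
  exists n (x : nat -> R), [/\ x 0%N = c, x n = d &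
    forall i, (i < n)%N -> x i < x i.+1 /\ x i.+1 - x i < delta].
Proof.
rewrite le_eqVlt => /predU1P[<- _|cd dp]; first by exists 0%N, (fun=> c).
set n := (Num.truncn ((d - c) / delta)).+1.
have n0 : 0 < n%:R :> R by rewrite ltr0n.
set q := (d - c) / n%:R.
have qp : 0 < q by rewrite divr_gt0 // subr_gt0.
exists n, (fun i => c + i%:R * q); split.
- by rewrite mul0r addr0.
- by rewrite mulrCA divff ?mulr1 ?subrKC // gt_eqF.
move=> i _; have -> : c + i.+1%:R * q - (c + i%:R * q) = q.
  by rewrite -natr1 mulrDl mul1r; ring.
split; first by rewrite -natr1 mulrDl mul1r addrA ltrDl.
by rewrite /q ltr_pdivrMr // mulrC -ltr_pdivrMr // truncnS_gt.
Qed.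

Lemma RS_integral_approx f F c d I : c <= d -> RS_integral_is f F c d I ->
  forall eps h, 0 < eps -> 0 < h -> exists n (x : nat -> R),
  [/\ x 0%N = c, x n = d,
      forall i, (i < n)%N -> x i < x i.+1 /\ x i.+1 - x i < h &
      `|\sum_(i < n) f (x i) * (F (x i.+1) - F (x i)) - I| < eps].
Proof.
move=> cd RS eps h ep hp; have [delta dp Hd] := RS eps ep.
have mp : 0 < Num.min delta h by rewrite lt_min dp hp.
have [n [x [x0 xn Hx]]] := uniform_partition cd mp.
exists n, x; split => //.
  by move=> i /Hx[? ]; rewrite lt_min => /andP[].
apply: Hd => // i /Hx[xi]; rewrite lt_min => /andP[xd _].
by rewrite lexx ltW.
Qed.

End partitions.

Section step_sums.
Variables (R : realType) (F g : R -> R) (c d : R) (n : nat) (x : nat -> R).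
Hypotheses (Fh : {in `[c, d] &, {homo F : u v / u <= v}})
  (x0 : x 0%N = c) (xn : x n = d) (incr : forall i, (i < n)%N -> x i < x i.+1)
  (g_ge0 : forall u, 0 <= g u).

Let RS_sum := \sum_(i < n) g (x i) * (F (x i.+1) - F (x i)).

Let incF i : (i < n)%N -> 0 <= F (x i.+1) - F (x i).
Proof.
have xin := partition_in_itv x0 xn incr.
by move=> lin; rewrite subr_ge0 Fh ?xin ?ltW ?incr // ltnW.
Qed.

Lemma RS_sum_ge_step t : (forall u, u <= t -> g u = 1) -> c <= t -> t < d ->
  F t - F c <= RS_sum.
Proof.
move=> g1 ct td.
have xin := partition_in_itv x0 xn incr.
have tin : t \in `[c, d] by rewrite in_itv /= ct ltW.
have /ex_minnP[k /andP[kn tk] kmin] : exists k, (k <= n)%N && (t < x k).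
  by exists n; rewrite leqnn xn.
rewrite /RS_sum -(big_mkord xpredT (fun i => g (x i) * (F (x i.+1) - F (x i)))).
rewrite (big_cat_nat (leq0n k) kn) /= (@telescope_sumr_eq _ _ _ (F \o x)) //.
  apply: (@le_trans _ _ (F (x k) - F (x 0%N))).
    by rewrite x0 lerD2r Fh // ?xin // ltW.
  rewrite lerDl big_nat_cond; apply: sumr_ge0 => i /andP[/andP[_ ilt] _].
  by rewrite mulr_ge0 ?incF.
move=> i /andP[_ ik]; rewrite g1 ?mul1r // leNgt; apply/negP => txi.
have := kmin i; rewrite txi (leq_trans (ltnW ik) kn) => /(_ isT).
by rewrite leqNgt ik.
Qed.

(* Tags are left endpoints, so the last interval with nonzero weight may
   reach up to h beyond s. *)
Lemma RS_sum_le_step s s' h :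
  (forall i, (i < n)%N -> x i.+1 - x i < h) ->
  (forall u, g u <= 1) -> (forall u, s <= u -> g u = 0) ->
  c < s -> s + h <= s' -> s' <= d -> 0 < h ->
  RS_sum <= F s' - F c.
Proof.
move=> mesh g1 g0 cs ss' s'd hp.
have xin := partition_in_itv x0 xn incr.
have s'in : s' \in `[c, d].
  by rewrite in_itv /= s'd andbT (le_trans (ltW cs)) // (le_trans _ ss') // lerDl ltW.
have /ex_minnP[m /andP[mn sm] mmin] : exists k, (k <= n)%N && (s <= x k).
  by exists n; rewrite leqnn xn (le_trans _ s'd) // (le_trans _ ss') // lerDl ltW.
have xm_lt : x m < s'.
  case: m mn sm mmin => [|m] mn sm mmin.
    by move: (lt_le_trans cs sm); rewrite x0 ltxx.
  have xm : x m < s.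
    rewrite ltNge; apply/negP => sxm.
    by have := mmin m; rewrite sxm (ltnW mn) => /(_ isT); rewrite ltnn.
  by apply: (lt_le_trans _ ss'); rewrite -(subrK (x m) (x m.+1)) addrC ltrD ?mesh.
rewrite /RS_sum -(big_mkord xpredT (fun i => g (x i) * (F (x i.+1) - F (x i)))).
rewrite (big_cat_nat (leq0n m) mn) /= [X in _ + X]big_nat_cond.
rewrite [X in _ + X]big1 ?addr0; last first.
  move=> i /andP[/andP[mi ilt] _]; rewrite g0 ?mul0r //.
  by rewrite (le_trans sm) // (partition_le incr) // mi ltnW.
apply: (@le_trans _ _ (\sum_(0 <= i < m) (F (x i.+1) - F (x i)))).
  rewrite big_nat_cond [X in _ <= X]big_nat_cond.
  apply: ler_sum => i /andP[/andP[_ im] _].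
  by rewrite ler_piMl ?incF // (leq_trans im).
by rewrite telescope_sumr // x0 lerD2r Fh // ?xin // ltW.
Qed.

End step_sums.

Section ramp.
Variable R : realType.

Definition ramp (t s u : R) : R := Num.min 1 (Num.max 0 ((s - u) / (s - t))).

Lemma ramp_ge0 t s u : 0 <= ramp t s u.
Proof. by rewrite /ramp le_min ler01 le_max lexx. Qed.

Lemma ramp_le1 t s u : ramp t s u <= 1.
Proof. by rewrite /ramp ge_min lexx. Qed.

Lemma ramp_eq1 t s u : t < s -> u <= t -> ramp t s u = 1.
Proof.
move=> ts ut; apply/min_idPl; rewrite le_max; apply/orP; right.
by rewrite ler_pdivlMr ?subr_gt0 // mul1r lerB.
Qed.

Lemma ramp_eq0 t s u : t < s -> s <= u -> ramp t s u = 0.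
Proof.
move=> ts su; rewrite /ramp (_ : Num.max _ _ = 0); first by apply/min_idPr.
by apply/max_idPl; rewrite pmulr_lle0 ?invr_gt0 ?subr_gt0 // subr_le0.
Qed.

Lemma continuous_ramp t s : continuous (ramp t s).
Proof.
rewrite (_ : ramp t s = cst 1 \min (cst 0 \max (fun u => (s - u) / (s - t)))) //.
apply: min_fun_continuous; first exact: cst_continuous.
apply: max_fun_continuous; first exact: cst_continuous.
by move=> u; apply: cvgM; [apply: cvgB; [exact: cvg_cst | exact: cvg_id] | exact: cvg_cst].
Qed.

Lemma measurable_ramp t s (D : set R) : measurable_fun D (fun u => (ramp t s u)%:E).
Proof.
apply/measurable_EFinP; apply: measurable_funTS; apply: continuous_measurable_fun.
exact: continuous_ramp.
Qed.

End ramp.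

Lemma measure_setI_conull d (T : measurableType d) (R : realType)
    (mu : {measure set T -> \bar R}) (D A : set T) :
  measurable D -> mu (~` D) = 0%E -> measurable A -> mu A = mu (A `&` D).
Proof.
move=> mD nul mA.
rewrite -[in LHS](setIT A) -(setUv D) setIUr measureU0 //.
- exact: measurableI.
- exact/measurableI/measurableC.
apply/eqP; rewrite eq_le measure_ge0 andbT -nul.
by apply: le_measure; rewrite ?inE; [exact/measurableI/measurableC|exact/measurableC|exact: subIsetr].
Qed.

Lemma measure_itvNy_right_ge (R : realType) (mu : {measure set R -> \bar R}) t d (v : \bar R) :
  t < d -> (mu `]-oo, d]%classic < +oo)%E ->
  (forall s, t < s -> s <= d -> (v <= mu `]-oo, s]%classic)%E) ->
  (v <= mu `]-oo, t]%classic)%E.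
Proof.
move=> td fin v_le; have dt : 0 < d - t by rewrite subr_gt0.
pose S k := `]-oo, t + (d - t) / k.+1%:R]%classic.
have S_gt k : 0 < (d - t) / k.+1%:R by rewrite divr_gt0 // ltr0n.
have S_le k : t + (d - t) / k.+1%:R <= d.
  rewrite -lerBrDl ler_pdivrMr ?ltr0n //.
  by apply: ler_peMr; [exact: ltW | rewrite ler1n].
have capS : \bigcap_k S k = `]-oo, t]%classic.
  rewrite eqEsubset; split => u /=; last first.
    by rewrite in_itv /= => ut k _; rewrite /S /= in_itv /= (le_trans ut) // lerDl ltW.
  move=> Su; rewrite in_itv /= leNgt; apply/negP => tu.
  have ut : 0 < u - t by rewrite subr_gt0.
  have := Su (Num.truncn ((d - t) / (u - t))) I; rewrite /S /= in_itv /= -lerBlDl.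
  by rewrite ler_pdivlMr ?ltr0n // mulrC -ler_pdivlMr // leNgt truncnS_gt.
have S_fin : (mu (S 0%N) < +oo)%E.
  apply: le_lt_trans fin; apply: le_measure; rewrite ?inE; try exact: measurable_itv.
  by move=> u; rewrite /S /= !in_itv /= => /le_trans; apply; exact: S_le.
have S_noninc : nonincreasing_seq S.
  move=> k l kl; apply/subsetPset => u; rewrite /S /= !in_itv /= => /le_trans; apply.
  by rewrite lerD2l ler_pM2l // lef_pV2 ?posrE ?ltr0n // ler_nat.
have cv := nonincreasing_cvg_mu S_fin (fun k => measurable_itv _)
  (bigcapT_measurable (fun k => measurable_itv _)) S_noninc.
rewrite -capS -(cvg_lim _ cv) //; apply: lime_ge; first by apply/cvg_ex; eexists; exact: cv.
by apply: nearW => k; apply: v_le; rewrite ?S_le // ltrDl.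
Qed.

Section corresponding_measure.
Variables (R : realType) (F : R -> R) (c d : R) (mu : {measure set R -> \bar R}).
Hypotheses (muF : corresponding_measure F c d mu) (cd : c <= d).

Let mcd : measurable (`[c, d]%classic : set R). Proof. exact: measurable_itv. Qed.

Lemma corresponding_measure_setI A : measurable A -> mu A = mu (A `&` `[c, d]).
Proof. exact: measure_setI_conull muF.1. Qed.

Lemma corresponding_measure_itv : mu `[c, d]%classic = (F d - F c)%:E.
Proof.
have [I RS intI] := muF.2 (cst 1) (continuous_subspaceT (@cst_continuous R R 1)).
rewrite -(mul1e (mu _)) -integral_cst // intI; congr (_%:E).
apply/eqP; rewrite eq_sym -subr_eq0 -normr_le0 leNgt; apply/negP => eps0.
have [n [x [x0 xn _]]] := RS_integral_approx cd RS eps0 ltr01.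
under eq_bigr do rewrite /= mul1r.
by rewrite -(big_mkord xpredT (fun i => F (x i.+1) - F (x i))) telescope_sumr // x0 xn ltxx.
Qed.

Lemma corresponding_measure_setT : mu setT = (F d - F c)%:E.
Proof. by rewrite corresponding_measure_setI // setTI corresponding_measure_itv. Qed.

Lemma corresponding_measure_fin_num A : measurable A -> mu A \is a fin_num.
Proof.
move=> mA; rewrite ge0_fin_numE ?measure_ge0 //.
apply: (le_lt_trans (le_measure _ _ _ (subsetT A))); rewrite ?inE //.
by rewrite [X in (X < _)%E](_ : _ = (F d - F c)%:E) ?ltry //; exact: corresponding_measure_setT.
Qed.

Hypothesis Fh : {in `[c, d] &, {homo F : u v / u <= v}}.

Lemma corresponding_measure_cdf_ge t s : c <= t -> t < s -> s <= d ->
  ((F t - F c)%:E <= mu `]-oo, s]%classic)%E.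
Proof.
move=> ct ts sd.
have [I RS intI] := muF.2 (ramp t s) (continuous_subspaceT (@continuous_ramp R t s)).
have I_ge : F t - F c <= I.
  apply/ler_addgt0Pr => e e0.
  have [n [x [x0 xn Hx close]]] := RS_integral_approx cd RS e0 ltr01.
  have incr i : (i < n)%N -> x i < x i.+1 by case/Hx.
  have := RS_sum_ge_step Fh x0 xn incr (@ramp_ge0 _ t s) (fun u => ramp_eq1 ts)
    ct (lt_le_trans ts sd).
  move: close; set S := \sum_(i < n) _ => /(le_lt_trans (ler_norm _)); lra.
apply: (@le_trans _ _ (mu (`]-oo, s] `&` `[c, d]))); last first.
  apply: le_measure; rewrite ?inE; [apply: measurableI| |apply: subIsetl];
    exact: measurable_itv.
apply: (@le_trans _ _ I%:E); first by rewrite lee_fin.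
rewrite -intI -(integral_indic _ mcd (measurable_itv `]-oo, s])).
apply: ge0_le_integral => //.
- by move=> u _; rewrite lee_fin ramp_ge0.
- exact: measurable_ramp.
- by apply/measurable_EFinP/measurable_indic; exact: measurable_itv.
move=> u _; rewrite lee_fin indicE; case: (leP u s) => us.
  by rewrite mem_set ?ramp_le1 // in_itv /= us.
by rewrite ramp_eq0 ?ler0n // ltW.
Qed.

Lemma corresponding_measure_cdf_le t s : c <= t -> t < s -> s <= d ->
  (mu `]-oo, t]%classic <= (F s - F c)%:E)%E.
Proof.
move=> ct ts sd.
set s1 := (t + s) / 2; set h := (s - t) / 2.
have ts1 : t < s1 by rewrite /s1; lra.
have h0 : 0 < h by rewrite /h; lra.
have [I RS intI] := muF.2 (ramp t s1) (continuous_subspaceT (@continuous_ramp R t s1)).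
have I_le : I <= F s - F c.
  apply/ler_addgt0Pr => e e0.
  have [n [x [x0 xn Hx close]]] := RS_integral_approx cd RS e0 h0.
  have incr i : (i < n)%N -> x i < x i.+1 by case/Hx.
  have := RS_sum_le_step Fh x0 xn incr (fun i ilt => (Hx i ilt).2)
    (@ramp_le1 _ t s1) (fun u => ramp_eq0 ts1) (le_lt_trans ct ts1) _ sd h0.
  rewrite /s1 /h => /(_ ltac:(lra)).
  move: close; rewrite distrC; set S := \sum_(i < n) _ => /(le_lt_trans (ler_norm _)).
  lra.
apply: (@le_trans _ _ I%:E); last by rewrite lee_fin.
rewrite -intI corresponding_measure_setI; last exact: measurable_itv.
rewrite -(integral_indic _ mcd (measurable_itv `]-oo, t])).
apply: ge0_le_integral => //.
- by apply/measurable_EFinP/measurable_indic; exact: measurable_itv.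
- exact: measurable_ramp.
move=> u _; rewrite lee_fin indicE; case: (leP u t) => ut.
  by rewrite mem_set ?ramp_eq1 // in_itv /= ut.
by rewrite memNset ?ramp_ge0 // /= in_itv /= leNgt ut.
Qed.

(* The distribution function of mu at t is the right limit F (t+) - F c,
   written as an infimum so that no continuity of F is required. *)
Lemma corresponding_measure_cdf t : c <= t -> t < d ->
  mu `]-oo, t]%classic = (inf (F @` `]t, d]) - F c)%:E.
Proof.
move=> ct td; set v := inf _.
have Fne : (F @` `]t, d]) (F d) by exists d => //; rewrite /= in_itv /= td lexx.
have Flb : has_lbound (F @` `]t, d]).
  exists (F t) => _ [s + <-]; rewrite /= in_itv /= => /andP[ts sd].
  by apply: Fh; rewrite ?in_itv /= ?ct ?sd ?(ltW td) ?(ltW ts) ?(le_trans ct (ltW ts)).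
have v_le s : t < s -> s <= d -> v <= F s.
  by move=> ts sd; apply: ge_inf => //; exists s; rewrite //= in_itv /= ts sd.
apply/eqP; rewrite eq_le; apply/andP; split.
  apply/lee_addgt0Pr => e e0.
  have [_ [s + <-] Fs] := inf_adherent e0 (conj (ex_intro _ _ Fne) Flb).
  rewrite /= in_itv /= => /andP[ts sd].
  apply: (le_trans (corresponding_measure_cdf_le ct ts sd)).
  rewrite -EFinD lee_fin; lra.
apply: (measure_itvNy_right_ge td) => [|s ts sd].
  by rewrite -ge0_fin_numE ?measure_ge0 // corresponding_measure_fin_num //; exact: measurable_itv.
have := corresponding_measure_cdf_ge (_ : c <= (t + s) / 2) (_ : (t + s) / 2 < s) sd.
move=> /(_ ltac:(lra) ltac:(lra)); apply: le_trans.
by rewrite lee_fin lerD2r v_le //; lra.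
Qed.

End corresponding_measure.

Lemma right_continuous_inf (R : realType) (N : R -> R) (m e : R) : m < e ->
  {in `[m, e] &, {homo N : u v / u <= v}} -> N x @[x --> m^'+] --> N m ->
  inf (N @` `]m, e]) = N m.
Proof.
move=> me Nh Nm; have /(cvg_unique _ Nm) -> // : N x @[x --> m^'+] --> inf (N @` `]m, e]).
apply: (@nondecreasing_at_right_cvgr _ N m (BRight e)) => [|u v|].
- by rewrite bnd_simp.
- by rewrite !in_itv /= => /andP[mu ue] /andP[mv ve]; apply: Nh; rewrite in_itv /= ?ue ?ve ltW.
- exists (N m) => _ [u + <-]; rewrite /= in_itv /= => /andP[mu ue].
  by apply: Nh; rewrite ?in_itv /= ?lexx ?(ltW me) ?(ltW mu) ?ue.
Qed.

Lemma inf_attained (R : realType) (S : set R) x : S x -> lbound S x -> inf S = x.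
Proof.
move=> Sx xlb; apply/eqP; rewrite eq_le lb_le_inf ?andbT //; last by exists x.
by apply: ge_inf => //; exists x.
Qed.

Lemma homo_itv_le (R : realType) (f : R -> R) a b x y :
  {in `[a, b] &, {homo f : u v / u <= v}} -> a <= x -> x <= y -> y <= b -> f x <= f y.
Proof.
by move=> fh ax xy yb; apply: fh; rewrite ?in_itv /= ?ax ?yb ?(le_trans ax xy) ?(le_trans xy yb).
Qed.

Section gen_inverse.
Variables (R : realType) (M : R -> R) (a b : R).
Hypotheses (ab : a <= b) (Mh : {in `[a, b] &, {homo M : x y / x <= y}}).
Local Notation X := (gen_inverse M a b).

Let M_le x y : a <= x -> x <= y -> y <= b -> M x <= M y.
Proof. exact: homo_itv_le. Qed.

Let upper_in y : y <= M b -> [set x | a <= x <= b /\ y <= M x] b.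
Proof. by move=> yb; split; rewrite // ab lexx. Qed.

Let upper_lbound y : has_lbound [set x | a <= x <= b /\ y <= M x].
Proof. by exists a => x [/andP[]]. Qed.

Lemma gen_inverse_itv y : y <= M b -> a <= X y <= b.
Proof.
move=> yb; rewrite ge_inf ?andbT //; last exact: upper_in.
by apply: lb_le_inf; [exists b; exact: upper_in | move=> x [/andP[]]].
Qed.

Lemma gen_inverse_leP y t : y <= M b -> a <= t ->
  X y <= t <-> forall s, t < s -> s <= b -> y <= M s.
Proof.
move=> yb aT; split.
  move=> Xt s ts sb.
  have [x [/andP[ax xb] yx] xs] := inf_lt (ex_intro _ _ (upper_in yb)) (le_lt_trans Xt ts).
  by rewrite (le_trans yx) // M_le // ltW.
move=> yM; rewrite leNgt; apply/negP => tX.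
have /andP[_ Xb] := gen_inverse_itv yb.
have : X y <= (t + X y) / 2.
  by apply: ge_inf => //; split; [apply/andP; split|apply: yM]; lra.
lra.
Qed.

Lemma gen_inverse_nondecreasing y1 y2 : y1 <= y2 -> y2 <= M b -> X y1 <= X y2.
Proof.
move=> y12 y2b; apply: lb_le_inf; first by exists b; exact: upper_in.
by move=> x [xI yx]; apply: ge_inf => //; split => //; exact: le_trans yx.
Qed.

Lemma inf_right_values_le t s : a <= t -> t < s -> s <= b ->
  inf (M @` `]t, b]) <= M s.
Proof.
move=> aT ts sb; apply: ge_inf; last by exists s; rewrite //= in_itv /= ts sb.
by exists (M a) => _ [u + <-]; rewrite /= in_itv /= => /andP[tu ub]; apply: M_le; lra.
Qed.

Lemma inf_right_values_ge t : a <= t -> t < b -> M a <= inf (M @` `]t, b]).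
Proof.
move=> aT tb; apply: lb_le_inf; first by exists (M b), b; rewrite //= in_itv /= tb lexx.
by move=> _ [s + <-]; rewrite /= in_itv /= => /andP[ts sb]; apply: M_le; lra.
Qed.

Lemma gen_inverse_preimage_le t : a <= t -> t < b ->
  `[M a, M b] `&` X @^-1` `]-oo, t] = `]-oo, inf (M @` `]t, b])] `&` `[M a, M b].
Proof.
move=> aT tb; have Mt : (M @` `]t, b]) (M b) by exists b; rewrite //= in_itv /= tb lexx.
apply/seteqP; split => y.
  move=> [yI]; have /andP[ay yb] : M a <= y <= M b by move: yI; rewrite /= in_itv.
  rewrite /= in_itv /= => /(gen_inverse_leP yb aT) yM; split => //.
  rewrite /= in_itv /= leNgt; apply/negP => my.
  have [_ [s + <-] Msy] := inf_lt (ex_intro _ _ Mt) my.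
  by rewrite /= in_itv /= => /andP[ts sb]; move: (yM s ts sb); lra.
move=> [ym yI]; have /andP[ay yb] : M a <= y <= M b by move: yI; rewrite /= in_itv.
split => //; rewrite /= in_itv /=; apply/(gen_inverse_leP yb aT) => s ts sb.
by move: ym; rewrite /= in_itv /= => /le_trans; apply; rewrite inf_right_values_le.
Qed.

End gen_inverse.

Lemma measure_itv_oc_cdf (R : realType) (mu : {measure set R -> \bar R}) x1 x2 :
  x1 <= x2 -> (mu `]-oo, x2]%classic < +oo)%E ->
  mu `]x1, x2]%classic = (mu `]-oo, x2]%classic - mu `]-oo, x1]%classic)%E.
Proof.
move=> x12 fin; rewrite -[X in (_ - mu X)%E](@setIidr _ `]-oo, x2]); last first.
  by move=> x; rewrite /= !in_itv /= => /le_trans; apply.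
rewrite -measureD //; try exact: measurable_itv.
congr (mu _); apply/seteqP; split => x; rewrite /= !in_itv /=.
  by move=> /andP[x1x ->]; split => //; apply/negP; rewrite -ltNge.
by move=> [-> /negP]; rewrite -ltNge => ->.
Qed.

Section main.
Variables (R : realType) (a b : R) (M N : R -> R) (lam nu : {measure set R -> \bar R}).
Hypotheses (ab : a < b) (Mh : {in `[a, b] &, {homo M : x y / x <= y}})
  (Nh : {in `[M a, M b] &, {homo N : x y / x <= y}})
  (lamNM : corresponding_measure (N \o M) a b lam)
  (nuN : corresponding_measure N (M a) (M b) nu)
  (N_rc : forall y, multi_level_set M a b y -> y < M b -> N x @[x --> y^'+] --> N y).
Local Notation X := (gen_inverse M a b).

Let M_le x y : a <= x -> x <= y -> y <= b -> M x <= M y.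
Proof. exact: homo_itv_le. Qed.

Let N_le x y : M a <= x -> x <= y -> y <= M b -> N x <= N y.
Proof. exact: homo_itv_le. Qed.

Let Mab : M a <= M b. Proof. by apply: M_le; rewrite ?lexx ?ltW. Qed.

Let NM_h : {in `[a, b] &, {homo N \o M : x y / x <= y}}.
Proof.
move=> x y; rewrite !in_itv /= => /andP[ax xb] /andP[ay yb] xy /=.
by rewrite N_le ?M_le.
Qed.

Section right_of_t.
Variable t : R.
Hypotheses (aT : a <= t) (tb : t < b).

Local Notation m := (inf (M @` `]t, b])).

Let M_ne : (M @` `]t, b]) (M b).
Proof. by exists b; rewrite //= in_itv /= tb lexx. Qed.

Let m_le s : t < s -> s <= b -> m <= M s.
Proof. move=> ts sb; exact: (inf_right_values_le Mh aT ts sb). Qed.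

Let Ma_m : M a <= m.
Proof. by have := inf_right_values_ge Mh aT tb. Qed.

Let M_right s : t < s -> s <= b -> m <= M s <= M b.
Proof.
move=> ts sb; apply/andP; split; first exact: m_le.
by apply: M_le => //; exact: le_trans aT (ltW ts).
Qed.

Let NM_lb : has_lbound ((N \o M) @` `]t, b]).
Proof.
exists (N m) => _ [s + <-]; rewrite /= in_itv /= => /andP[ts sb].
by have /andP[ms sb'] := M_right ts sb; apply: N_le.
Qed.

(* A value m = M s0 attained right of t is also attained at (t + s0) / 2, so
   it is a multiple level, where N is right-continuous. *)
Lemma inf_NM_right_itv_attained s0 : t < s0 <= b -> M s0 = m -> m < M b ->
  inf ((N \o M) @` `]t, b]) = inf (N @` `]m, M b]).
Proof.
move=> /andP[ts0 s0b] Ms0 mb.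
have m_multi : multi_level_set M a b m.
  split; first by rewrite Ma_m ltW.
  have mid_t : t < (t + s0) / 2 by lra.
  have mid_s0 : (t + s0) / 2 < s0 by lra.
  have a_mid : a <= (t + s0) / 2 by move: aT; lra.
  have mid_b : (t + s0) / 2 <= b by lra.
  exists s0, ((t + s0) / 2); split => //.
  - by rewrite s0b (le_trans aT) ?ltW.
  - by rewrite a_mid mid_b.
  - by rewrite gt_eqF.
  apply/eqP; rewrite eq_le; apply/andP; split; last exact: m_le.
  by rewrite -Ms0; apply: M_le => //; exact: ltW.
have Nh_m : {in `[m, M b] &, {homo N : u v / u <= v}}.
  move=> u v; rewrite !in_itv /= => /andP[mu ub] /andP[mv vb].
  by apply: Nh; rewrite in_itv /= ?ub ?vb ?(le_trans Ma_m).
rewrite [RHS]right_continuous_inf //; last exact: N_rc.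
apply: inf_attained; first by exists s0; rewrite //= ?in_itv /= ?ts0 ?s0b ?Ms0.
move=> _ [s + <-]; rewrite /= in_itv /= => /andP[ts sb].
by have /andP[ms sb'] := M_right ts sb; apply: N_le.
Qed.

Lemma inf_NM_right_itv_unattained : (forall s, t < s <= b -> M s != m) -> m < M b ->
  inf ((N \o M) @` `]t, b]) = inf (N @` `]m, M b]).
Proof.
move=> unatt mb; have N_lb : has_lbound (N @` `]m, M b]).
  exists (N m) => _ [y + <-]; rewrite /= in_itv /= => /andP[my yb].
  by apply: N_le => //; exact: ltW.
apply/eqP; rewrite eq_le; apply/andP; split.
  apply: lb_le_inf; first by exists (N (M b)), (M b); rewrite //= in_itv /= mb lexx.
  move=> _ [y + <-]; rewrite /= in_itv /= => /andP[my yb].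
  have [_ [s + <-] Msy] := inf_lt (ex_intro _ _ M_ne) my.
  rewrite /= in_itv /= => /andP[ts sb]; have /andP[ms _] := M_right ts sb.
  apply: (@le_trans _ _ (N (M s))).
    by apply: ge_inf => //; exists s; rewrite //= in_itv /= ts sb.
  by apply: N_le => //; [exact: le_trans Ma_m ms | exact: ltW].
apply: lb_le_inf; first by exists (N (M b)), b; rewrite //= in_itv /= tb lexx.
move=> _ [s + <-]; rewrite /= in_itv /= => /andP[ts sb].
have /andP[ms sb'] := M_right ts sb.
apply: ge_inf => //; exists (M s); rewrite //= in_itv /= sb' andbT lt_neqAle ms andbT.
by rewrite eq_sym unatt ?ts.
Qed.

Lemma inf_NM_right_itv : m < M b ->
  inf ((N \o M) @` `]t, b]) = inf (N @` `]m, M b]).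
Proof.
have [[s0 s0I Ms0]|unatt] := pselect (exists2 s, t < s <= b & M s = m).
  exact: inf_NM_right_itv_attained s0I Ms0.
by apply: inf_NM_right_itv_unattained => s sI; apply/eqP => Ms; apply: unatt; exists s.
Qed.

Lemma lam_cdf_right_itv :
  lam `]-oo, t]%classic = nu (`[M a, M b] `&` X @^-1` `]-oo, t]).
Proof.
rewrite gen_inverse_preimage_le ?(ltW ab) //.
rewrite -(corresponding_measure_setI nuN); last exact: measurable_itv.
rewrite (corresponding_measure_cdf lamNM (ltW ab) NM_h aT tb).
have [mb|bm] := ltP m (M b).
  by rewrite (corresponding_measure_cdf nuN Mab Nh Ma_m mb) inf_NM_right_itv.
rewrite (corresponding_measure_setI nuN); last exact: measurable_itv.
rewrite setIidr; last by move=> y; rewrite /= !in_itv /= => /andP[_ yb]; exact: le_trans yb bm.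
rewrite (corresponding_measure_itv nuN Mab); congr (_ - _)%:E.
rewrite -[RHS]inf1; congr inf; apply/seteqP; split => y.
  move=> [s + <-]; rewrite /= in_itv /= => /andP[ts sb].
  have /andP[ms sb'] := M_right ts sb.
  by rewrite /= (_ : M s = M b) //; apply/eqP; rewrite eq_le sb' (le_trans bm ms).
by move=> ->; exists b; rewrite //= in_itv /= tb lexx.
Qed.

End right_of_t.

Lemma lam_cdf t : lam `]-oo, t]%classic = nu (`[M a, M b] `&` X @^-1` `]-oo, t]).
Proof.
have X_ab y : `[M a, M b]%classic y -> a <= X y <= b.
  by rewrite /= in_itv /= => /andP[_]; apply: gen_inverse_itv; exact: ltW.
rewrite (corresponding_measure_setI lamNM); last exact: measurable_itv.
have [ta|aT] := ltP t a.
  rewrite [_ `&` _](_ : _ = set0); last first.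
    by apply/seteqP; split => // x [] /=; rewrite !in_itv /= => xt /andP[ax _]; lra.
  rewrite [_ `&` _](_ : _ = set0) ?measure0 //.
  apply/seteqP; split => // y [/X_ab/andP[aX _]] /=; rewrite in_itv /=; lra.
have [bt|tb] := leP b t; last first.
  by rewrite -(corresponding_measure_setI lamNM) ?lam_cdf_right_itv //; exact: measurable_itv.
rewrite setIidr; last by move=> x; rewrite /= !in_itv /= => /andP[_ xb]; lra.
rewrite setIidl; last by move=> y /[dup] /X_ab/andP[_ Xb] _; rewrite /= in_itv /=; lra.
by rewrite (corresponding_measure_itv lamNM) ?(ltW ab) // (corresponding_measure_itv nuN Mab).
Qed.

(* X is nondecreasing on ]-oo, M b] only (beyond M b it is inf set0 = 0), so
   its argument is capped at M b to get a measurable map on all of R. *)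
Let Xc y := X (Num.min y (M b)).

Let measurable_Xc : measurable_fun setT Xc.
Proof.
apply: nondecreasing_measurable => // y1 y2 y12.
rewrite /Xc gen_inverse_nondecreasing ?(ltW ab) //; first exact: le_min2.
by rewrite ge_min lexx orbT.
Qed.

(* The measure instance of pushforward takes the measurability of Xc as an
   argument, which canonical structure inference cannot supply. *)
Let lamX : {measure set R -> \bar R} :=
  ltac:(refine (pushforward nu Xc); exact: measurable_Xc).

Let lamXE A : measurable A -> lamX A = nu (`[M a, M b] `&` X @^-1` A).
Proof.
move=> mA; rewrite /lamX /= /pushforward [LHS](corresponding_measure_setI nuN); last first.
  by rewrite -[Y in measurable Y]setTI; exact: (measurable_Xc measurableT mA).
rewrite setIC; congr (nu _); apply/seteqP; split => y [yI];
  by move: (yI); rewrite /Xc /preimage /= in_itv /= => /andP[_ yb]; rewrite (min_idPl yb).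
Qed.

Let lam_pushforward A : measurable A -> lam A = lamX A.
Proof.
have lam_fin B : measurable B -> (lam B < +oo)%E.
  by move=> mB; rewrite -ge0_fin_numE // (corresponding_measure_fin_num lamNM) ?ltW.
have lamX_fin B : measurable B -> (lamX B < +oo)%E.
  move=> mB; rewrite -ge0_fin_numE // (corresponding_measure_fin_num nuN Mab) //.
  by rewrite -[Y in measurable Y]setTI; exact: (measurable_Xc measurableT mB).
pose g k := `]- k%:R, k%:R]%classic : set R.
apply: (measure_unique (@ocitv R) g) => //.
- exact: ocitvI.
- by move=> k; exists (- k%:R, k%:R).
- apply/seteqP; split => // x _; exists (Num.truncn `|x|).+1 => //=.
  have := truncnS_gt `|x|; rewrite ltr_norml => /andP[x_gt x_lt].
  by rewrite /g /= in_itv /= x_gt ltW.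
- move=> B /ocitvP[->|[[x1 x2] /= x12 ->]]; first by rewrite !measure0.
  rewrite !measure_itv_oc_cdf ?ltW ?lam_fin ?lamX_fin //; try exact: measurable_itv.
  by rewrite !lamXE ?lam_cdf //; exact: measurable_itv.
- by move=> k; apply: lam_fin; exact: measurable_itv.
Qed.

Lemma lam_image_gen_inverse E : measurable E ->
  lam E = nu (`[M a, M b] `&` X @^-1` E).
Proof. by move=> mE; rewrite lam_pushforward // lamXE. Qed.

Lemma lam_integral_gen_inverse (f : R -> R) : measurable_fun `[a, b] f ->
  (exists k : R, forall x, a <= x <= b -> `|f x| <= k) ->
  (\int[lam]_(x in `[a, b]) (f x)%:E = \int[nu]_(y in `[M a, M b]) (f (X y))%:E)%E.
Proof.
move=> mf [k fk].
have mab : measurable (`[a, b]%classic : set R) by exact: measurable_itv.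
pose g := f \_ `[a, b]%classic.
have mg : measurable_fun setT g by apply/(measurable_restrictT f mab).
have gE x : a <= x <= b -> g x = f x by move=> xI; rewrite /g patchT // inE /= in_itv.
have Xc_ab y : a <= Xc y <= b.
  by apply: (gen_inverse_itv (ltW ab)); rewrite ge_min lexx orbT.
have preXc : Xc @^-1` `[a, b] = setT.
  by apply/seteqP; split => // y _; rewrite /preimage /= in_itv /= Xc_ab.
have int_gXc : nu.-integrable setT (EFin \o (g \o Xc)).
  apply: measurable_bounded_integrable => //.
  - by rewrite (corresponding_measure_setT nuN Mab) ltry.
  - exact: measurableT_comp mg measurable_Xc.
  rewrite /bounded_near; near=> K; move=> y _ /=.
  apply: (@le_trans _ _ k); first by rewrite gE // fk.
  by near: K; apply: nbhs_pinfty_ge; exact: num_real.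
rewrite (eq_measure_integral lamX); last by move=> A mA _; exact: lam_pushforward.
transitivity (\int[lamX]_(x in `[a, b]) (g x)%:E)%E.
  by apply: eq_integral => x; rewrite inE /= in_itv /= => xI; rewrite gE.
rewrite (integral_pushforward measurable_Xc) //; last by rewrite preXc.
  rewrite preXc (negligible_integral (measurableC _) measurableT int_gXc nuN.1); last first.
    exact: measurable_itv.
  rewrite setTD setCK; apply: eq_integral => y; rewrite inE /= in_itv /= => /andP[_ yb].
  by rewrite /= /Xc (min_idPl yb) gE // (gen_inverse_itv (ltW ab)).
exact/measurable_EFinP.
Unshelve. all: by end_near.
Qed.

End main.

Theorem mainTheorem1 (R : realType) (a b : R) (M N : R -> R)
    (lam nu : {measure set R -> \bar R}) :
  a < b ->
  {in `[a, b] &, {homo M : x y / x <= y}} ->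
  {in `[M a, M b] &, {homo N : x y / x <= y}} ->
  corresponding_measure (N \o M) a b lam ->
  corresponding_measure N (M a) (M b) nu ->
  (forall y, multi_level_set M a b y -> y < M b ->
     N x @[x --> y^'+] --> N y) ->
  (forall E : set R, measurable E -> E `<=` `[a, b] ->
     lam E = nu (`[M a, M b] `&` (gen_inverse M a b @^-1` E))) /\
  (forall f : R -> R, measurable_fun `[a, b] f ->
     (exists k : R, forall x, a <= x <= b -> `|f x| <= k) ->
     (\int[lam]_(x in `[a, b]) (f x)%:E
      = \int[nu]_(y in `[M a, M b]) (f (gen_inverse M a b y))%:E)%E).
Proof.
move=> ab Mh Nh lamNM nuN N_rc; split => [E mE _|f mf f_bd].
- exact: lam_image_gen_inverse ab Mh Nh lamNM nuN N_rc E mE.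
- exact: lam_integral_gen_inverse ab Mh Nh lamNM nuN N_rc f mf f_bd.
Qed.
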